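(* Let $\Sigma=(\mathbf{x},\mathbf{F})$ be an LP seed of rank $n\ge2$ satisfying Condition 1.2. Then $$\mathrm{Im}(\varphi)=R[x_2,x_2^{(-)},\dots,x_n,x_n^{(-)}],\qquad\text{where } x_j^{(-)}=\begin{cases}x'_j,& \text{if } F_j \text{ does not involve } x_1,\\ x_j^{-1},&\text{otherwise.}\end{cases}$$
   Context: $R$ is a unique factorization domain containing $\mathbb{Z}$ and $\mathcal{F}$ is the field of rational functions in $n$ variables over $\mathrm{Frac}(R)$. An LP seed of rank $n$ is a pair $(\mathbf{x},\mathbf{F})$ where $\mathbf{x}=\{x_1,\dots,x_n\}$ is a transcendence basis of $\mathcal{F}$ over $\mathrm{Frac}(R)$ and $\mathbf{F}=\{F_1,\dots,F_n\}$ are irreducible polynomials in $R[x_1,\dots,x_n]$ with $x_j\nmid F_i$ for all $i,j$ and $F_i$ not involving $x_i$. The exchange Laurent polynomial is $\hat F_j=F_j/\prod_{k\neq j}x_k^{a_k}$, with $a_k\in\mathbb{Z}_{\ge0}$ maximal such that $F_k^{a_k}$ divides $F_j|_{x_k\leftarrow F_k/x'_k}$ in $R[x_1,\dots,x_{k-1},(x'_k)^{-1},x_{k+1},\dots,x_n]$. Set $x'_j=\hat F_j/x_j$. Lexicographic order on $\mathbb{Z}^n$: $\mathbf{a}\prec\mathbf{a}'$ if the first nonzero entry of $\mathbf{a}'-\mathbf{a}$ is positive; the lexicographically first monomial of a polynomial is its term with $\prec$-smallest exponent vector. Condition 1.2: for every $k\in[1,n]$, with $M_k$ the lexicographically first monomial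 of $F_k$: (i) $\hat F_k=F_k$; (ii) $M_k=x_{k+1}^{v_{k+1,k}}\cdots x_n^{v_{n,k}}$ (coefficient $1$) with $v_{\cdot,k}\in\mathbb{Z}_{\ge0}$ for $k\in[1,n-1]$, and $M_n=1$; (iii) if $k\ne1$ and $F_k$ involves $x_1$, then every monomial of $F_k-M_k$ is divisible by $x_1$; (iv) if $k\notin\{1,2\}$, $F_k$ does not involve $x_1$, and there is $i\in[2,k-1]$ such that $x_k$ divides $M_i$, then every monomial of $F_k-M_k$ is divisible by $x_i$. Under (i), $R[x_2,x'_2,\dots,x_n,x'_n]\subseteq R[x_1,x_2^{\pm1},\dots,x_n^{\pm1}]$; $\varphi:R[x_2,x'_2,\dots,x_n,x'_n]\to R[x_2^{\pm1},\dots,x_n^{\pm1}]$ is the restriction of the $R$-algebra homomorphism $R[x_1,x_2^{\pm1},\dots,x_n^{\pm1}]\to R[x_2^{\pm1},\dots,x_n^{\pm1}]$ sending $x_1\mapsto0$, $x_i^{\pm1}\mapsto x_i^{\pm1}$ ($i\ge2$). *)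

From HB Require Import structures.
From mathcomp Require Import all_boot all_order all_algebra.
From mathcomp Require Import fraction.
From mathcomp Require Import mpoly.
From Stdlib Require Import ClassicalEpsilon.

Set Implicit Arguments.
Unset Strict Implicit.
Unset Printing Implicit Defensive.
Import GRing.Theory.
Local Open Scope ring_scope.

Definition dvdR (T : comUnitRingType) (a b : T) : Prop := exists c : T, b = c * a.

Definition irredR (T : comUnitRingType) (p : T) : Prop :=
  p != 0 /\ p \isn't a GRing.unit /\
  (forall a b : T, p = a * b -> a \is a GRing.unit \/ b \is a GRing.unit).

Definition primeR (T : comUnitRingType) (p : T) : Prop :=
  p != 0 /\ p \isn't a GRing.unit /\
  (forall a b : T, dvdR p (a * b) -> dvdR p a \/ dvdR p b).

(* Unique factorization domain: every nonzero nonunit is a product of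
   irreducibles, and irreducibles are prime (equivalently: the factorization
   is unique up to order and units). *)
Definition UFD (T : idomainType) : Prop :=
  (forall x : T, x != 0 -> x \isn't a GRing.unit ->
     exists s : seq T, (forall y, y \in s -> irredR y) /\ x = \prod_(y <- s) y)
  /\ (forall p : T, irredR p -> primeR p).

Definition contains_Z (T : idomainType) : Prop :=
  forall z : int, z%:~R = 0 :> T -> z = 0.

Section LP.
Variables (R : idomainType) (n : nat).
Local Notation P := {mpoly R[n]}.
(* F is the field of rational functions: Frac(R[x_1..x_n]) = Frac(R)(x_1..x_n) *)
Local Notation K := {fraction P}.

Definition involves (F : P) (i : 'I_n) : bool :=
  has (fun m : 'X_{1..n} => (0 < m i)%N) (msupp F).

Definition involves1 (F : P) : bool := [exists i : 'I_n, (val i == 0%N) && involves F i].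

Definition x1divm (m : 'X_{1..n}) : Prop := forall i : 'I_n, val i = 0%N -> (0 < m i)%N.

Definition lexlt (m m' : 'X_{1..n}) : Prop :=
  exists i : 'I_n, (forall l : 'I_n, (l < i)%N -> m l = m' l) /\ (m i < m' i)%N.

Definition lexfirst (F : P) (m : 'X_{1..n}) : Prop :=
  m \in msupp F /\ forall m', m' \in msupp F -> m' != m -> lexlt m m'.

Definition LP_seed (Fs : 'I_n -> P) : Prop :=
  forall i : 'I_n,
    irredR (Fs i) /\ (forall j : 'I_n, ~ dvdR ('X_j : P) (Fs i)) /\ ~~ involves (Fs i) i.

Definition xK (i : 'I_n) : K := tofrac ('X_i : P).
Definition iR (c : R) : K := tofrac (c%:MP : P).

(* F_j|_{x_k <- F_k / x'_k}, written as a polynomial in the variables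
   x_l (l <> k) and y = (x'_k)^{-1}, where y is stored in slot k. *)
Definition subst_exch (Fs : 'I_n -> P) (j k : 'I_n) : P :=
  Fs j \mPo [tuple (if i == k then Fs k * 'X_k else 'X_i) | i < n].

Definition is_exch_exp (Fs : 'I_n -> P) (j k : 'I_n) (a : nat) : Prop :=
  dvdR (Fs k ^+ a) (subst_exch Fs j k) /\ ~ dvdR (Fs k ^+ a.+1) (subst_exch Fs j k).

Definition exch_exp (Fs : 'I_n -> P) (j k : 'I_n) : nat :=
  epsilon (inhabits 0%N) (is_exch_exp Fs j k).

Definition hatF (Fs : 'I_n -> P) (j : 'I_n) : K :=
  tofrac (Fs j) / \prod_(k < n | k != j) xK k ^+ exch_exp Fs j k.

Definition xpK (Fs : 'I_n -> P) (j : 'I_n) : K := hatF Fs j / xK j.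

(* Condition 1.2 (0-based: index k stands for x_{k+1}) *)
Definition cond12 (Fs : 'I_n -> P) : Prop :=
  forall k : 'I_n,
    hatF Fs k = tofrac (Fs k) /\
    exists m : 'X_{1..n},
      lexfirst (Fs k) m /\
      (Fs k)@_m = 1 /\ (forall i : 'I_n, (i <= k)%N -> m i = 0%N) /\
      ((k != 0 :> nat) -> involves1 (Fs k) ->
         forall m', m' \in msupp (Fs k - 'X_[m]) -> x1divm m') /\
      ((2 <= k)%N ->
         ~~ involves1 (Fs k) ->
         forall i : 'I_n, (1 <= i < k)%N ->
         forall mi, lexfirst (Fs i) mi -> (0 < mi k)%N ->
         forall m', m' \in msupp (Fs k - 'X_[m]) -> (0 < m' i)%N).

Definition subalg (gs : seq K) (z : K) : Prop :=
  exists p : {mpoly R[size gs]}, z = mmap iR (fun i => gs`_i) p.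

(* graph of phi : R[x_1, x_2^{+-1},..,x_n^{+-1}] -> R[x_2^{+-1},..,x_n^{+-1}],
   x_1 |-> 0: an element P / x^e (e_1 = 0) is sent to P|_{x_1=0} / x^e *)
Definition zero1 : n.-tuple P := [tuple (if i == 0 :> nat then 0 else 'X_i) | i < n].

Definition phi_graph (z w : K) : Prop :=
  exists (Q : P) (e : 'X_{1..n}),
    (forall i : 'I_n, (i == 0 :> nat) -> e i = 0%N) /\
    z = tofrac Q / tofrac ('X_[e] : P) /\
    w = tofrac (Q \mPo zero1) / tofrac ('X_[e] : P).

Definition gens_src (Fs : 'I_n -> P) : seq K :=
  flatten [seq [:: xK j; xpK Fs j] | j : 'I_n <- enum 'I_n & (0 < val j)%N].

Definition xminus (Fs : 'I_n -> P) (j : 'I_n) : K :=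
  if involves1 (Fs j) then (xK j)^-1
  else xpK Fs j.

Definition gens_tgt (Fs : 'I_n -> P) : seq K :=
  flatten [seq [:: xK j; xminus Fs j] | j : 'I_n <- enum 'I_n & (0 < val j)%N].

End LP.

(* The map phi, which sets x_1 = 0 in the numerator of P / x^e (e_1 = 0), is a
   ring map. It fixes x_j, and also x'_j = F_j / x_j when F_j is free of x_1;
   when F_j involves x_1, Condition 1.2 (iii) leaves phi(x'_j) = M_j / x_j,
   where M_j is a monomial in x_(j+1), ..., x_n. This gives one inclusion.
   Conversely it suffices to show that x_j^-1 is in the image when F_j involves
   x_1, by descending induction on j, starting from M_j x_j^-1 = phi(x'_j) and
   x_j x_j^-1 = 1. More generally, if g M_l x_j^-1 and g x_l x_j^-1 are in the
   image then so is g x_j^-1: remove the variables x_p (p > l) of M_l one at a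
   time. If F_p involves x_1, multiply by x_p^-1 (induction on j); otherwise by
   Condition 1.2 (iv) every monomial of F_p - M_p is a multiple of x_l, so
   g M_p x_j^-1 = g x_p x_j^-1 x'_p - g (F_p - M_p) x_j^-1 is in the image, and
   x_p is removed by the same statement for p in place of l. *)

From HB Require Import structures.
From mathcomp Require Import all_boot all_order all_algebra.
From mathcomp Require Import fraction.
From mathcomp Require Import mpoly.
Set Implicit Arguments. Unset Strict Implicit. Unset Printing Implicit Defensive.
Import GRing.Theory.
Local Open Scope ring_scope.

Lemma ord_ind_down (k : nat) (Q : 'I_k -> Prop) :
  (forall i : 'I_k, (forall l : 'I_k, (i < l)%N -> Q l) -> Q i) -> forall i, Q i.
Proof.
move=> IH i; elim/ltn_ind: (k - i)%N {-2}i (erefl (k - i)%N) => d IHd {}i di.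
apply: IH => l il; apply: (IHd (k - l)%N) => //.
by rewrite -di; exact: ltn_sub2l (ltn_ord i) il.
Qed.

Section Closed.
Variables (R : idomainType) (n : nat).
Local Notation P := {mpoly R[n]}.
Local Notation K := {fraction P}.

Definition subalg_closed (S : K -> Prop) : Prop :=
  [/\ forall c, S (iR n c), forall a b, S a -> S b -> S (a + b)
    & forall a b, S a -> S b -> S (a * b)].

Variables (S : K -> Prop) (hS : subalg_closed S).

Lemma closed_cst c : S (iR n c). Proof. by case: hS => Sc _ _; apply: Sc. Qed.
Lemma closedD a b : S a -> S b -> S (a + b). Proof. by case: hS => _ SD _; apply: SD. Qed.
Lemma closedM a b : S a -> S b -> S (a * b). Proof. by case: hS => _ _ SM; apply: SM. Qed.

Lemma closed0 : S 0.
Proof. by have := closed_cst 0; rewrite /iR mpolyC0 rmorph0. Qed.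

Lemma closed1 : S 1.
Proof. by have := closed_cst 1; rewrite /iR mpolyC1 rmorph1. Qed.

Lemma closedB a b : S a -> S b -> S (a - b).
Proof.
move=> Sa Sb; rewrite -mulN1r; apply: closedD => //; apply: closedM => //.
by have := closed_cst (-1); rewrite /iR mpolyCN mpolyC1 rmorphN1.
Qed.

Lemma closed_sum (I : eqType) (r : seq I) (F : I -> K) :
  (forall i, i \in r -> S (F i)) -> S (\sum_(i <- r) F i).
Proof.
by move=> SF; rewrite big_seq; apply: big_ind => //; [exact: closed0 | exact: closedD].
Qed.

Lemma closed_prod (I : Type) (r : seq I) (F : I -> K) :
  (forall i, S (F i)) -> S (\prod_(i <- r) F i).
Proof. by move=> SF; apply: big_ind => //; [exact: closed1 | exact: closedM]. Qed.

Lemma closedX a k : S a -> S (a ^+ k).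
Proof. by move=> Sa; elim: k => [|k IHk]; [exact: closed1 | rewrite exprS; apply: closedM]. Qed.

End Closed.

Section Subalgebra.
Variables (R : idomainType) (n : nat) (gs : seq {fraction {mpoly R[n]}}).

Let mmap_iR k h (p : {mpoly R[k]}) :
  mmap (iR n) h p = mmap (@tofrac _ \o (@mpolyC n R)) h p.
Proof. by apply: eq_bigr. Qed.

Lemma closed_subalg : subalg_closed (subalg gs).
Proof.
split.
- by move=> c; exists c%:MP; rewrite mmap_iR mmapC.
- by move=> a b [p ->] [q ->]; exists (p + q); rewrite !mmap_iR mmapD.
- by move=> a b [p ->] [q ->]; exists (p * q); rewrite !mmap_iR rmorphM.
Qed.

Lemma subalg_mem a : a \in gs -> subalg gs a.
Proof.
move=> ags; have lt : (index a gs < size gs)%N by rewrite index_mem.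
by exists 'X_(Ordinal lt); rewrite mmap_iR mmapX mmap1U /= nth_index.
Qed.

Lemma subalg_min (S : _ -> Prop) : subalg_closed S -> (forall a, a \in gs -> S a) ->
  forall z, subalg gs z -> S z.
Proof.
move=> hS gsS z [p ->]; apply: (closed_sum hS) => m _.
apply: (closedM hS); first exact: closed_cst.
by apply: (closed_prod hS) => i; apply/(closedX hS)/gsS/mem_nth.
Qed.

End Subalgebra.

Section Phi.
Variables (R : idomainType) (n : nat).
Local Notation P := {mpoly R[n]}.
Local Notation K := {fraction P}.
Local Notation z1 := (zero1 R n).

Definition x1free (m : 'X_{1..n}) : Prop := forall i : 'I_n, val i = 0%N -> m i = 0%N.

Lemma x1freeU (j : 'I_n) : (0 < val j)%N -> x1free U_(j).
Proof. by move=> jp i i0; rewrite mnm1E; case: eqP => // ji; rewrite ji i0 in jp. Qed.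

Lemma tofracX_neq0 (m : 'X_{1..n}) : tofrac ('X_[m] : P) != 0.
Proof.
rewrite tofrac_eq0; apply/eqP => X0.
by have := mcoeffX R m m; rewrite X0 mcoeff0 eqxx => /esym/eqP; rewrite oner_eq0.
Qed.

Lemma xK_neq0 (j : 'I_n) : xK R j != 0. Proof. exact: tofracX_neq0. Qed.

Lemma comp_zero1X (m : 'X_{1..n}) : x1free m -> 'X_[m] \mPo z1 = 'X_[m].
Proof.
move=> hm; rewrite comp_mpolyX [RHS]mpolyXE_id; apply: eq_bigr => i _.
by rewrite tnth_mktuple; case: ifP => // /eqP /hm ->; rewrite !expr0.
Qed.

Lemma comp_zero1X_denom (e : 'X_{1..n}) :
  (forall i : 'I_n, (i == 0 :> nat) -> e i = 0%N) -> 'X_[e] \mPo z1 = 'X_[e].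
Proof. by move=> he; apply: comp_zero1X => i /eqP; apply: he. Qed.

Lemma comp_zero1_id (h : P) : (forall m, m \in msupp h -> x1free m) -> h \mPo z1 = h.
Proof.
move=> hh; rewrite {1}[h]mpolyE raddf_sum /= [RHS]mpolyE; apply: eq_big_seq => m hm.
by rewrite comp_mpolyZ comp_zero1X //; apply: hh.
Qed.

Lemma comp_zero1_eq0 (h : P) : (0 < n)%N ->
  (forall m, m \in msupp h -> x1divm m) -> h \mPo z1 = 0.
Proof.
move=> n0 hh; rewrite {1}[h]mpolyE raddf_sum /= big1_seq // => m /andP[_ hm].
rewrite comp_mpolyZ comp_mpolyX (bigD1 (Ordinal n0)) //= tnth_mktuple /=.
by rewrite expr0n (gtn_eqF (hh _ hm (Ordinal n0) erefl)) mul0r scaler0.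
Qed.

Lemma phi_graphD (z w z' w' : K) :
  phi_graph z w -> phi_graph z' w' -> phi_graph (z + z') (w + w').
Proof.
move=> [Q [e [he [-> ->]]]] [Q' [e' [he' [-> ->]]]].
exists (Q * 'X_[e'] + Q' * 'X_[e]), (e + e')%MM.
split; first by move=> i i0; rewrite mnmDE he ?he'.
have ne := tofracX_neq0 e; have ne' := tofracX_neq0 e'.
have c0 : 'X_[e] \mPo z1 = 'X_[e] := comp_zero1X_denom he.
have c0' : 'X_[e'] \mPo z1 = 'X_[e'] := comp_zero1X_denom he'.
rewrite (addf_div _ _ ne ne') (addf_div _ _ ne ne') mpolyXD.
rewrite [(_ + _) \mPo _]rmorphD /= [(Q * _) \mPo _]rmorphM /= [(Q' * _) \mPo _]rmorphM /= c0 c0'.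
by rewrite !rmorphD /= !rmorphM.
Qed.

Lemma phi_graphM (z w z' w' : K) :
  phi_graph z w -> phi_graph z' w' -> phi_graph (z * z') (w * w').
Proof.
move=> [Q [e [he [-> ->]]]] [Q' [e' [he' [-> ->]]]].
exists (Q * Q'), (e + e')%MM.
split; first by move=> i i0; rewrite mnmDE he ?he'.
by rewrite !mulf_div mpolyXD rmorphM /= !rmorphM.
Qed.

Lemma phi_graph_tofrac (h : P) : (forall m, m \in msupp h -> x1free m) ->
  phi_graph (tofrac h) (tofrac h).
Proof.
move=> hh; exists h, 0%MM; split; first by move=> i _; rewrite mnm0E.
by rewrite mpolyX0 rmorph1 !divr1 comp_zero1_id.
Qed.

Lemma phi_graph_cst (c : R) : phi_graph (iR n c) (iR n c).
Proof.
apply: phi_graph_tofrac => m; rewrite msuppC; case: (c == 0) => //.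
by rewrite inE => /eqP -> i _; rewrite mnm0E.
Qed.

Lemma phi_graph_fun (z w w' : K) : phi_graph z w -> phi_graph z w' -> w = w'.
Proof.
move=> [Q [e [he [-> ->]]]] [Q' [e' [he' [E ->]]]].
have ne := tofracX_neq0 e; have ne' := tofracX_neq0 e'.
have c0 : 'X_[e] \mPo z1 = 'X_[e] := comp_zero1X_denom he.
have c0' : 'X_[e'] \mPo z1 = 'X_[e'] := comp_zero1X_denom he'.
move/eqP: E; rewrite (eqr_div _ _ ne ne') -!rmorphM /= tofrac_eq => /eqP /(congr1 (comp_mpoly z1)).
rewrite !rmorphM /= c0 c0' => E.
by apply/eqP; rewrite (eqr_div _ _ ne ne') -!rmorphM /= E.
Qed.

Lemma closed_x1free_mono (S : K -> Prop) : subalg_closed S ->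
  (forall i : 'I_n, (0 < val i)%N -> S (xK R i)) ->
  forall m, x1free m -> S (tofrac ('X_[m] : P)).
Proof.
move=> hS Sx m hm; rewrite mpolyXE_id rmorph_prod; apply: (closed_prod hS) => i.
have [i0|ip] := posnP (val i); first by rewrite hm // expr0 rmorph1; exact: closed1.
by rewrite rmorphXn; apply/(closedX hS)/Sx.
Qed.

Lemma cancel_monomial (A T : K -> Prop) (m : 'X_{1..n}) :
  (forall p : 'I_n, (0 < m p)%N -> forall g, A g ->
     A (g * xK R p) /\ (T (g * xK R p) -> T g)) ->
  forall g, A g -> T (g * tofrac ('X_[m] : P)) -> T g.
Proof.
elim: {m}(mdeg m) {-2}m (erefl (mdeg m)) => [|d IHd] m dm hm g Ag.
  by move: dm => /eqP; rewrite mdeg_eq0 => /eqP ->; rewrite mpolyX0 rmorph1 mulr1.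
have [p mp] : exists p : 'I_n, (0 < m p)%N.
  apply/existsP; apply: contraTT isT => /existsPn m0.
  suff : mdeg m == 0%N by rewrite dm.
  by rewrite mdeg_eq0; apply/eqP/mnmP => i; rewrite mnm0E; apply/eqP; rewrite -leqn0 leqNgt m0.
have mE : m = (U_(p) + (m - U_(p)))%MM.
  by apply/mnmP => i; rewrite mnmDE mnmBE mnm1E; case: eqP => [<-|_]; rewrite ?subnKC // subn0.
have [Agp Tgp] := hm p mp g Ag.
move=> Tgm; apply/Tgp/(IHd (m - U_(p))%MM) => //.
- by move: dm; rewrite {1}mE mdegD mdeg1 add1n => -[].
- move=> q mq; apply: hm; rewrite mnmBE in mq; exact: leq_trans mq (leq_subr _ _).
- by rewrite -mulrA -rmorphM -mpolyXD -mE.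
Qed.

End Phi.

Lemma mem_gens (n : nat) (T : eqType) (f g : 'I_n -> T) (a : T) :
  a \in flatten [seq [:: f j; g j] | j <- enum 'I_n & (0 < val j)%N] <->
  exists2 j : 'I_n, (0 < val j)%N & a = f j \/ a = g j.
Proof.
split.
  move/flattenP => [s /mapP [j]]; rewrite mem_filter mem_enum andbT => jp -> /=.
  by rewrite !inE => /orP [/eqP -> | /eqP ->]; exists j; auto.
move=> [j jp fg]; apply/flattenP; exists [:: f j; g j].
  by apply/mapP; exists j; rewrite // mem_filter jp mem_enum.
by rewrite !inE; case: fg => ->; rewrite eqxx ?orbT.
Qed.

Section Seed.
Variables (R : idomainType) (n : nat) (Fs : 'I_n -> {mpoly R[n]}).
Hypotheses (hn : (2 <= n)%N) (hc : cond12 Fs).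
Local Notation P := {mpoly R[n]}.
Local Notation K := {fraction P}.
Local Notation xK := (xK R).

Lemma xpKE (j : 'I_n) : xpK Fs j = tofrac (Fs j) / xK j.
Proof. by rewrite /xpK; have [-> _] := hc j. Qed.

Lemma x1free_supp (F : P) : ~~ involves1 F -> forall m, m \in msupp F -> x1free m.
Proof.
move=> hF m hm i i0; apply/eqP; rewrite eqn0Ngt; apply: contra hF => mi.
by apply/existsP; exists i; rewrite i0 eqxx; apply/hasP; exists m.
Qed.

Lemma phi_graph_xK (j : 'I_n) : (0 < val j)%N -> phi_graph (xK j) (xK j).
Proof.
by move=> jp; apply: phi_graph_tofrac => m; rewrite msuppX inE => /eqP ->; apply: x1freeU.
Qed.

Lemma phi_graph_xpK_free (j : 'I_n) : (0 < val j)%N -> ~~ involves1 (Fs j) ->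
  phi_graph (xpK Fs j) (xpK Fs j).
Proof.
move=> jp hF; rewrite xpKE; exists (Fs j), U_(j)%MM.
split; first by move=> i /eqP; apply: x1freeU.
by rewrite comp_zero1_id //; apply: x1free_supp.
Qed.

Lemma phi_graph_xpK_x1 (j : 'I_n) : (0 < val j)%N -> involves1 (Fs j) ->
  exists2 m : 'X_{1..n}, lexfirst (Fs j) m /\ (forall i : 'I_n, (i <= j)%N -> m i = 0%N) &
  phi_graph (xpK Fs j) (tofrac ('X_[m] : P) / xK j).
Proof.
move=> jp hF; have [_ [m [lf [_ [mz [hiii _]]]]]] := hc j.
exists m => //; rewrite xpKE; exists (Fs j), U_(j)%MM.
split; first by move=> i /eqP; apply: x1freeU.
split => //; rewrite -[Fs j](subrK 'X_[m]) rmorphD /= comp_zero1X; last first.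
  by move=> i i0; apply: mz; rewrite i0.
rewrite comp_zero1_eq0 ?add0r //; first exact: leq_trans hn.
by move=> m' hm'; apply: hiii; rewrite // -lt0n.
Qed.

Definition phi_image (w : K) : Prop :=
  exists z, subalg (gens_src Fs) z /\ phi_graph z w.

Lemma closed_phi_image : subalg_closed phi_image.
Proof.
have hS := closed_subalg (gens_src Fs).
split.
- by move=> c; exists (iR n c); split; [exact: closed_cst | exact: phi_graph_cst].
- move=> a b [z [sz pz]] [z' [sz' pz']]; exists (z + z').
  by split; [exact: closedD | exact: phi_graphD].
- move=> a b [z [sz pz]] [z' [sz' pz']]; exists (z * z').
  by split; [exact: closedM | exact: phi_graphM].
Qed.

Lemma phi_image_xK (j : 'I_n) : (0 < val j)%N -> phi_image (xK j).
Proof.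
move=> jp; exists (xK j); split; last exact: phi_graph_xK.
by apply: subalg_mem; apply/mem_gens; exists j; auto.
Qed.

Lemma phi_image_xpK (j : 'I_n) : (0 < val j)%N -> ~~ involves1 (Fs j) ->
  phi_image (xpK Fs j).
Proof.
move=> jp hF; exists (xpK Fs j); split; last exact: phi_graph_xpK_free.
by apply: subalg_mem; apply/mem_gens; exists j; auto.
Qed.

Lemma phi_image_x1free_mono (m : 'X_{1..n}) : x1free m -> phi_image (tofrac ('X_[m] : P)).
Proof. exact: (closed_x1free_mono closed_phi_image phi_image_xK). Qed.

Lemma phi_image_mul_lead (l p : 'I_n) (mp : 'X_{1..n}) (h : K) :
  (0 < val p)%N -> ~~ involves1 (Fs p) -> x1free mp ->
  (forall m, m \in msupp (Fs p - 'X_[mp]) -> (0 < m l)%N) ->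
  phi_image (h * xK l) -> phi_image (h * xK p) -> phi_image (h * tofrac ('X_[mp] : P)).
Proof.
move=> pp hF hmp hl Bhl Bhp; have hS := closed_phi_image.
have BhF : phi_image (h * tofrac (Fs p)).
  have := closedM hS Bhp (phi_image_xpK pp hF).
  by rewrite xpKE mulrCA -mulrA mulrCA mulfV ?xK_neq0 // mulr1.
have BhD : phi_image (h * tofrac (Fs p - 'X_[mp])).
  rewrite [X in tofrac X]mpolyE rmorph_sum mulr_sumr; apply: (closed_sum hS) => m hm.
  have mE : m = ((m - U_(l)) + U_(l))%MM.
    apply/mnmP => i; rewrite mnmDE mnmBE mnm1E.
    by case: eqP => [<-|_]; rewrite ?subnK ?hl // subn0 addn0.
  rewrite -mul_mpolyC [in 'X_[m]]mE mpolyXD !rmorphM /= mulrCA.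
  apply: (closedM hS); first exact: closed_cst.
  rewrite mulrCA; apply: (closedM hS) => //; apply: phi_image_x1free_mono => i i0.
  rewrite mnmBE; move: hm => /msuppB_le; rewrite mem_cat => /orP [hm|].
    by rewrite (x1free_supp hF hm).
  by rewrite msuppX inE => /eqP ->; rewrite hmp.
by have := closedB hS BhF BhD; rewrite -mulrBr rmorphB /= opprB addrC subrK.
Qed.

Lemma phi_image_cancel_xK (p : 'I_n) (g : K) :
  phi_image (xK p)^-1 -> phi_image (g * xK p) -> phi_image g.
Proof.
move=> Binv Bgp; have := closedM closed_phi_image Bgp Binv.
by rewrite -mulrA mulfV ?xK_neq0 // mulr1.
Qed.

Section Descent.
Variable j : 'I_n.
Hypothesis jp : (0 < val j)%N.
Hypothesis IHinv : forall p : 'I_n, (j < p)%N ->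
  (0 < val p)%N -> involves1 (Fs p) -> phi_image (xK p)^-1.
Local Notation u := (xK j)^-1.

Lemma phi_image_cancel_lead (l : 'I_n) : (j <= l)%N ->
  forall m, lexfirst (Fs l) m -> (forall i : 'I_n, (i <= l)%N -> m i = 0%N) ->
  forall g, phi_image (g * tofrac ('X_[m] : P) * u) -> phi_image (g * xK l * u) ->
  phi_image (g * u).
Proof.
elim/ord_ind_down: l => l IHl jl m lfm mz g Bgm Bgl.
have hS := closed_phi_image.
apply: (@cancel_monomial _ _ (fun g => phi_image (g * xK l * u))
  (fun g => phi_image (g * u)) m) Bgl Bgm => p mlp {}g Bgl.
have lp : (l < p)%N by rewrite ltnNge; apply: contraL mlp => /mz ->.
have pp : (0 < val p)%N by apply: leq_ltn_trans lp.
split.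
  rewrite -!mulrA mulrCA [xK p * _]mulrC !mulrA.
  exact: (closedM hS Bgl (phi_image_xK pp)).
move=> Bgp; have [hF|hF] := boolP (involves1 (Fs p)).
  apply: (phi_image_cancel_xK (IHinv (leq_ltn_trans jl lp) pp hF)).
  by rewrite mulrAC.
have [_ [mp [lfp [_ [mpz [_ hiv]]]]]] := hc p.
apply: (IHl p lp (ltnW (leq_ltn_trans jl lp)) mp lfp mpz g) => //.
have mp_free : x1free mp by move=> i i0; apply: mpz; rewrite i0.
have mp_l : forall m', m' \in msupp (Fs p - 'X_[mp]) -> (0 < m' l)%N.
  have l1 : (1 <= l)%N := leq_trans jp jl.
  have l_range : (1 <= l < p)%N by rewrite l1 lp.
  exact: (hiv (leq_ltn_trans l1 lp) hF l l_range m lfm mlp).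
by rewrite mulrAC; apply: (phi_image_mul_lead pp hF mp_free mp_l); rewrite mulrAC.
Qed.

End Descent.

Lemma phi_image_xK_inv (j : 'I_n) : (0 < val j)%N -> involves1 (Fs j) ->
  phi_image (xK j)^-1.
Proof.
elim/ord_ind_down: j => j IHinv jp hF.
have [m [lfm mz] pm] := phi_graph_xpK_x1 jp hF.
have := phi_image_cancel_lead jp IHinv (leqnn j) lfm mz (g := 1).
rewrite !mul1r mulfV ?xK_neq0 //; apply; last exact: closed1 (closed_phi_image).
exists (xpK Fs j); split => //.
by apply: subalg_mem; apply/mem_gens; exists j; auto.
Qed.

Lemma subalg_tgt_phi_image w : subalg (gens_tgt Fs) w -> phi_image w.
Proof.
apply: subalg_min; first exact: closed_phi_image.
move=> a /mem_gens [j jp [->|->]]; first exact: phi_image_xK.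
rewrite /xminus; case: ifPn => hF; first exact: phi_image_xK_inv.
exact: phi_image_xpK.
Qed.

Lemma phi_graph_subalg z : subalg (gens_src Fs) z ->
  exists w, phi_graph z w /\ subalg (gens_tgt Fs) w.
Proof.
have hT := closed_subalg (gens_tgt Fs).
have xKT (j : 'I_n) : (0 < val j)%N -> subalg (gens_tgt Fs) (xK j).
  by move=> jp; apply: subalg_mem; apply/mem_gens; exists j; auto.
have xmT (j : 'I_n) : (0 < val j)%N -> subalg (gens_tgt Fs) (xminus Fs j).
  by move=> jp; apply: subalg_mem; apply/mem_gens; exists j; auto.
apply: (subalg_min (S := fun z => exists w, phi_graph z w /\ subalg (gens_tgt Fs) w)).
  split.
  - by move=> c; exists (iR n c); split; [exact: phi_graph_cst | exact: closed_cst].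
  - move=> a b [w [pa ta]] [w' [pb tb]]; exists (w + w').
    by split; [exact: phi_graphD | exact: closedD].
  - move=> a b [w [pa ta]] [w' [pb tb]]; exists (w * w').
    by split; [exact: phi_graphM | exact: closedM].
move=> a /mem_gens [j jp [->|->]].
  by exists (xK j); split; [exact: phi_graph_xK | exact: xKT].
have [hF|hF] := boolP (involves1 (Fs j)).
  have [m [_ mz] pm] := phi_graph_xpK_x1 jp hF.
  exists (tofrac ('X_[m] : P) / xK j); split => //; apply: (closedM hT).
    by apply: closed_x1free_mono => // i i0; apply: mz; rewrite i0.
  by have := xmT j jp; rewrite /xminus hF.
exists (xpK Fs j); split; first exact: phi_graph_xpK_free.
by have := xmT j jp; rewrite /xminus (negbTE hF).
Qed.

End Seed.

Theorem lemma4p21 (R : idomainType) (n : nat) (Fs : 'I_n -> {mpoly R[n]}) :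
  UFD R -> contains_Z R -> (2 <= n)%N ->
  LP_seed Fs -> cond12 Fs ->
  forall w : {fraction {mpoly R[n]}},
    (exists z, subalg (gens_src Fs) z /\ phi_graph z w) <->
    subalg (gens_tgt Fs) w.
Proof.
move=> _ _ hn _ hc w; split; last exact: subalg_tgt_phi_image.
move=> [z [sz pz]]; have [w' [pw' tw']] := phi_graph_subalg hn hc sz.
by rewrite (phi_graph_fun pz pw').
Qed.
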